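(* Let $S\subseteq\mathcal X$ be a finite nonempty set of candidates. The look-up based CF algorithm $$A_{\mathrm{LU}}(x)=\operatorname*{argmin}_{x'\in S} c(x,x'),$$ where ties among minimizers are broken by a fixed deterministic rule (a fixed total order on $S$, independent of $x$), is IPF stable globally.
   Context: Input space $\mathcal X=\mathcal X_1\times\cdots\times\mathcal X_D$, where each feature $d$ is either categorical ($\mathcal X_d$ a finite set) or numerical ($\mathcal X_d\subseteq\mathbb R$). Cost: $c(x,x')=\sum_{d=1}^D c_d(x_d,x'_d)$ with $c_d(x_d,x'_d)=\mathbb 1\{x_d\neq x'_d\}$ for categorical $d$ and $c_d(x_d,x'_d)=|F_d(x_d)-F_d(x'_d)|$ for numerical $d$, where $F_d$ is a fixed cumulative distribution function (nondecreasing) of feature $d$. A CF algorithm $A$ maps each $x\in\mathcal X$ to a probability distribution over $\mathcal X$; $A$ is deterministic at $x$ if this distribution is a point mass, written $A(x)$. $\Phi(x,x')$ denotes the set of all $w\in\mathcal X$ such that for each numerical $d$, $w_d$ lies in the closed interval between $x_d$ and $x'_d$, and for each categorical $d$, $w_d\in\{x_d,x'_d\}$. IPF stable: $A$ is IPF stable at $x$ if (1) $A$ is deterministic at $x$, and (2) for all $w\in\Phi(x,A(x))$, $A$ is deterministic at $w$ and $A(w)=A(x)$. $A$ is IPF stable globally if it is IPF stable at every $x\in\mathcal X$. *)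

From HB Require Import structures.
From mathcomp Require Import all_boot all_order all_algebra.
From mathcomp Require Import reals.
Set Implicit Arguments. Unset Strict Implicit. Unset Printing Implicit Defensive.
Import Order.TTheory GRing.Theory Num.Theory.
Local Open Scope ring_scope.

Section Defs.
Variables (R : realType) (D : nat).

(* Points of the ambient space R^D; feature d of x is x d.
   Categorical values are encoded as real numbers (any finite set injects into R). *)
Definition vec := {ffun 'I_D -> R}.

Definition is_cdf (F : R -> R) : Prop :=
  [/\ (forall a b, a <= b -> F a <= F b),
      (forall a e, 0 < e -> exists2 dl, 0 < dl &
          forall b, a <= b -> b < a + dl -> F b - F a < e),
      (forall e, 0 < e -> exists M, forall a, a <= M -> F a < e) &
      (forall e, 0 < e -> exists M, forall a, M <= a -> 1 - F a < e)].

Definition inX (dom : 'I_D -> R -> Prop) (x : vec) : Prop :=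
  forall d, dom d (x d).

Definition cost_d (cat : pred 'I_D) (F : 'I_D -> R -> R) (d : 'I_D) (a b : R) : R :=
  if cat d then (a != b)%:R else `|F d a - F d b|.

Definition cost (cat : pred 'I_D) (F : 'I_D -> R -> R) (x x' : vec) : R :=
  \sum_(d < D) cost_d cat F d (x d) (x' d).

Definition Phi (cat : pred 'I_D) (dom : 'I_D -> R -> Prop) (x x' w : vec) : Prop :=
  inX dom w /\
  forall d, if cat d then (w d == x d) || (w d == x' d)
            else Num.min (x d) (x' d) <= w d <= Num.max (x d) (x' d).

(* A CF algorithm maps each x to a probability distribution over the space,
   given by the probability it assigns to each (boolean) event. *)
Definition cf_alg := vec -> pred vec -> R.

Definition dirac (y : vec) : pred vec -> R := fun E => (E y)%:R.

Definition deterministic_at (A : cf_alg) (x y : vec) : Prop :=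
  forall E : pred vec, A x E = dirac y E.

Definition IPF_stable_at (cat : pred 'I_D) (dom : 'I_D -> R -> Prop)
    (A : cf_alg) (x : vec) : Prop :=
  exists y, deterministic_at A x y /\
    forall w, Phi cat dom x y w -> deterministic_at A w y.

Definition IPF_stable_globally (cat : pred 'I_D) (dom : 'I_D -> R -> Prop)
    (A : cf_alg) : Prop :=
  forall x, inX dom x -> IPF_stable_at cat dom A x.

(* Look-up algorithm: S is listed in the fixed tie-breaking total order;
   A_LU(x) is the first (w.r.t. this order) minimiser of c(x, .) over S. *)
Definition lookup_pt (cat : pred 'I_D) (F : 'I_D -> R -> R) (S : seq vec) (x : vec) : vec :=
  nth (head x S) S
      (find (fun y => all (fun t => cost cat F x y <= cost cat F x t) S) S).

Definition A_LU (cat : pred 'I_D) (F : 'I_D -> R -> R) (S : seq vec) : cf_alg :=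
  fun x => dirac (lookup_pt cat F S x).

End Defs.

From HB Require Import structures.
From mathcomp Require Import all_boot all_order all_algebra.
From mathcomp Require Import reals.
From mathcomp Require Import lra.
Set Implicit Arguments. Unset Strict Implicit. Unset Printing Implicit Defensive.
Import Order.TTheory GRing.Theory Num.Theory.
Local Open Scope ring_scope.

(* Two facts about the cost drive the proof:
   - c is a pseudo-metric: c(x, t) <= c(x, w) + c(w, t)  (cost_triangle);
   - c is additive along the box Phi(x, y): for w in Phi(x, y),
     c(x, y) = c(x, w) + c(w, y)  (cost_additive_Phi); this needs the
     per-feature CDFs to be nondecreasing.
   Together they give, for y = A_LU(x), w in Phi(x, y) and every t,
       c(w, y) - c(w, t) <= c(x, y) - c(x, t),
   i.e. moving from x to w only strengthens every preference for y.  An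
   abstract lemma on first minimisers of a list (first_argmin_stable) shows
   that such a change of objective keeps the first minimiser, including the
   tie-breaking; hence A_LU(w) = A_LU(x) and A_LU is IPF stable. *)

Section FirstArgmin.
Variables (R : realDomainType) (T : eqType).

Definition is_argmin (f : T -> R) (s : seq T) (y : T) : bool :=
  all (fun t => f y <= f t) s.

Definition argmin_index (f : T -> R) (s : seq T) : nat :=
  find (is_argmin f s) s.

Lemma has_argmin (f : T -> R) (s : seq T) : s != [::] -> has (is_argmin f s) s.
Proof.
elim: s => [//|a s IH] _; case: (eqVneq s [::]) => [-> | /IH /hasP [y ys ymin]].
  by rewrite /= /is_argmin /= lexx.
have [fay | fya] := leP (f a) (f y); apply/hasP.
- exists a; first exact: mem_head.
  by rewrite /is_argmin /= lexx; apply/allP => t /(allP ymin); apply: le_trans.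
- exists y; first by rewrite inE ys orbT.
  by rewrite /is_argmin /= (ltW fya).
Qed.

Lemma find_first (a : pred T) (s : seq T) (x0 : T) (i : nat) :
  (i < size s)%N -> a (nth x0 s i) ->
  (forall j, (j < i)%N -> ~~ a (nth x0 s j)) -> find a s = i.
Proof.
move=> lt_i_s ai before_i.
have has_a : has a s by apply/(has_nthP x0); exists i.
case: (ltngtP (find a s) i) => // cmp.
- by move: (before_i _ cmp); rewrite nth_find.
- by move: (before_find x0 cmp); rewrite ai.
Qed.

(* If replacing the objective f by g never weakens a preference for the
   first f-minimiser y (g y - g t <= f y - f t for all t in s), then y is
   also the first g-minimiser: earlier elements t are strictly f-worse than
   y, hence strictly g-worse as well. *)
Lemma first_argmin_stable (f g : T -> R) (s : seq T) (y0 : T) :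
  s != [::] ->
  let y := nth y0 s (argmin_index f s) in
  (forall t, t \in s -> g y - g t <= f y - f t) ->
  argmin_index g s = argmin_index f s.
Proof.
move=> s_nonempty y preference.
have i_in_range : (argmin_index f s < size s)%N.
  by rewrite -has_find; apply: has_argmin.
have ymin : is_argmin f s y by apply: nth_find; rewrite has_find.
have yming : is_argmin g s y.
  apply/allP => t ts; have := allP ymin t ts; have := preference t ts; lra.
apply: (@find_first _ _ y0) => // j lt_j_i.
have /negbT /allPn [u us] := before_find y0 lt_j_i.
rewrite -ltNge => fu_lt; set t := nth y0 s j in fu_lt *.
have f_t_worse : f y < f t by apply: le_lt_trans fu_lt; exact: (allP ymin).
have t_in_s : t \in s by apply/mem_nth/(ltn_trans lt_j_i).
apply/allPn; exists y; first exact: mem_nth.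
rewrite -ltNge; have := preference t t_in_s; lra.
Qed.

End FirstArgmin.

Section CostGeometry.
Variables (R : realType) (D : nat) (cat : pred 'I_D) (F : 'I_D -> R -> R).

Lemma costd_triangle (d : 'I_D) (a b c : R) :
  cost_d cat F d a b <= cost_d cat F d a c + cost_d cat F d c b.
Proof.
rewrite /cost_d; case: (cat d); last exact: ler_distD.
have [-> | neq_ab] := eqVneq a b; first by rewrite addr_ge0 ?ler0n.
have [<- | neq_ac] := eqVneq a c; first by rewrite neq_ab add0r.
by rewrite /= lerDl ler0n.
Qed.

Lemma cost_triangle (x y w : vec R D) :
  cost cat F x y <= cost cat F x w + cost cat F w y.
Proof. by rewrite /cost -big_split /=; apply: ler_sum => d _; apply: costd_triangle. Qed.

Lemma costd_between (d : 'I_D) (a b c : R) :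
  (~~ cat d -> {homo F d : u v / u <= v}) ->
  (if cat d then (c == a) || (c == b) else Num.min a b <= c <= Num.max a b) ->
  cost_d cat F d a b = cost_d cat F d a c + cost_d cat F d c b.
Proof.
rewrite /cost_d; case: (cat d) => [_ | /(_ isT) mon].
  by case/orP => /eqP ->; rewrite eqxx ?add0r ?addr0.
case: (leP a b) => ab /andP [ac cb].
- have Fac := mon _ _ ac; have Fcb := mon _ _ cb; have Fab := mon _ _ ab.
  by rewrite !ler0_norm ?subr_le0 //; lra.
- have Fca := mon _ _ ac; have Fbc := mon _ _ cb; have Fba := mon _ _ (ltW ab).
  by rewrite !ger0_norm ?subr_ge0 //; lra.
Qed.

Lemma cost_additive_Phi (dom : 'I_D -> R -> Prop) (x y w : vec R D) :
  (forall d, ~~ cat d -> {homo F d : u v / u <= v}) ->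
  Phi cat dom x y w -> cost cat F x y = cost cat F x w + cost cat F w y.
Proof.
move=> mon [_ w_between]; rewrite /cost -big_split /=.
by apply: eq_bigr => d _; apply: costd_between (mon d) (w_between d).
Qed.

End CostGeometry.

Theorem theorem3 (R : realType) (D : nat)
  (cat : pred 'I_D) (dom : 'I_D -> R -> Prop)
  (hcat_fin : forall d, cat d -> exists s : seq R, forall v, dom d v -> v \in s)
  (F : 'I_D -> R -> R) (hF : forall d, ~~ cat d -> is_cdf (F d))
  (S : seq (vec R D)) (hS0 : S != [::]) (hSuniq : uniq S)
  (hSX : forall s, s \in S -> inX dom s) :
  IPF_stable_globally cat dom (A_LU cat F S).
Proof.
have mon : forall d, ~~ cat d -> {homo F d : u v / u <= v} by move=> d /hF [].
move=> x _; exists (lookup_pt cat F S x); split => // w w_in_Phi E.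
rewrite /A_LU; congr (dirac _ E).
set y := lookup_pt cat F S x.
have preference : forall t, t \in S ->
    cost cat F w y - cost cat F w t <= cost cat F x y - cost cat F x t.
  move=> t _; have := cost_additive_Phi mon w_in_Phi.
  have := cost_triangle cat F x t w; lra.
have same_index : argmin_index (cost cat F w) S = argmin_index (cost cat F x) S.
  by apply: (first_argmin_stable (y0 := head x S) hS0).
rewrite /y /lookup_pt -/(argmin_index (cost cat F w) S) same_index.
by apply: set_nth_default; rewrite -has_find; apply: has_argmin.
Qed.
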